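(* Let $\Sigma$ be a set, let $1\le p<\infty$, suppose $d$ is a separating quasi-metric on $\Sigma$, $\alpha,\beta:\Sigma^+\to\mathbb{R}$ with $\alpha^p,\beta^p\in\Gamma(\Sigma)$, and let $D$ be the $\ell^p$ edit distance on $\Sigma^*$ extending $d$, $\alpha$ and $\beta$. Assume in addition that for all $a,b\in\Sigma$ and $u,v,x\in\Sigma^*$: (W1) $d^p(a,b)+\beta^p(ubv)\ge\beta^p(uav)$; (W2) $d^p(a,b)+\alpha^p(uav)\ge\alpha^p(ubv)$; (W3) $\beta^p(uv)+\beta^p(x)\ge\beta^p(uxv)$; (W4) $\alpha^p(uv)+\alpha^p(x)\ge\alpha^p(uxv)$; (W5) $\beta^p(uxv)+\alpha^p(x)\ge\beta^p(uv)$; (W6) $\alpha^p(uxv)+\beta^p(x)\ge\alpha^p(uv)$; (W7) $\alpha^p(ux)+\beta^p(xv)\ge\alpha^p(u)+\beta^p(v)$; (W8) $\beta^p(ux)+\alpha^p(xv)\ge\beta^p(u)+\alpha^p(v)$, where $\alpha(e)=\beta(e)=0$ by convention. Then $D$ is a separating quasi-metric on $\Sigma^*$.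
   Context: $\Sigma^*$ is the free monoid on $\Sigma$ (finite words, concatenation, empty word $e$), $\Sigma^+=\Sigma^*\setminus\{e\}$; for $w=w_1\cdots w_n$, $|w|=n$, $\bar w_k=w_1\cdots w_k$, $\bar w_0=e$. A quasi-metric on $X$ is a map $q:X\times X\to\mathbb{R}_{\ge0}$ with $q(x,y)=q(y,x)=0\iff x=y$ and $q(x,z)\le q(x,y)+q(y,z)$; it is separating if $q(x,y)=0$ implies $x=y$. A gap penalty over $\Sigma^+$ is a positive function $\gamma:\Sigma^+\to\mathbb{R}$ with $\gamma(u)+\gamma(v)\ge\gamma(uv)$ for all $u,v\in\Sigma^+$; $\Gamma(\Sigma)$ is the set of these. $\ell^p$ edit distance extending $d$, $\alpha$, $\beta$: for $x,y\in\Sigma^*$, $m=|x|$, $n=|y|$, $D(e,e)=0$, $D(e,\bar y_j)=\alpha(\bar y_j)$ ($1\le j\le n$), $D(\bar x_i,e)=\beta(\bar x_i)$ ($1\le i\le m$), and for $1\le i\le m$, $1\le j\le n$, \[D(\bar x_i,\bar y_j)=\Big(\min\Big\{D^p(\bar x_{i-1},\bar y_{j-1})+d^p(x_i,y_j),\ \min_{1\le k\le j}\{D^p(\bar x_i,\bar y_{j-k})+\alpha^p(y_{j-k+1}\cdots y_j)\},\ \min_{1\le k\le i}\{D^p(\bar x_{i-k},\bar y_j)+\beta^p(x_{i-k+1}\cdots x_i)\}\Big\}\Big)^{1/p},\] with $D(x,y)=D(\bar x_m,\bar y_n)$. *)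

From Stdlib Require Import Reals List.
Import ListNotations.
Open Scope R_scope.
Set Implicit Arguments.

(* Real power x^p for x >= 0 (x^p := 0 for x <= 0; only used with p >= 1). *)
Definition rpow (x p : R) : R := if Rlt_dec 0 x then Rpower x p else 0.

Definition quasi_metric (X : Type) (q : X -> X -> R) : Prop :=
  (forall x y, 0 <= q x y) /\
  (forall x y, (q x y = 0 /\ q y x = 0) <-> x = y) /\
  (forall x y z, q x z <= q x y + q y z).

Definition separating (X : Type) (q : X -> X -> R) : Prop :=
  forall x y, q x y = 0 -> x = y.

Definition gap_penalty (S : Type) (g : list S -> R) : Prop :=
  (forall w, w <> [] -> 0 < g w) /\
  (forall u v, u <> [] -> v <> [] -> g (u ++ v) <= g u + g v).

Definition ext0 (S : Type) (f : list S -> R) (w : list S) : R :=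
  match w with [] => 0 | _ => f w end.

Section EditDistance.
Variables (A : Type) (d : A -> A -> R) (alpha beta : list A -> R) (p : R).

Let pw (z : R) := rpow z p.

(* EDp fuel u v = D^p(u, v), computed by the recursion of the paper, where
   u = xbar_i, v = ybar_j are the current prefixes; fuel >= |u|+|v|+1. *)
Fixpoint EDp (fuel : nat) (u v : list A) : R :=
  match fuel with
  | O => 0
  | S f =>
    match rev u, rev v with
    | [], [] => 0
    | [], _ => pw (alpha v)
    | _, [] => pw (beta u)
    | a :: ru, b :: rv =>
      fold_right Rmin (EDp f (rev ru) (rev rv) + pw (d a b))
        (map (fun k => EDp f u (firstn (length v - k) v)
                        + pw (alpha (skipn (length v - k) v)))
             (seq 1 (length v))
         ++ map (fun k => EDp f (firstn (length u - k) u) v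
                        + pw (beta (skipn (length u - k) u)))
             (seq 1 (length u)))
    end
  end.

Definition edit_dist (x y : list A) : R :=
  rpow (EDp (S (length x + length y)) x y) (1 / p).

End EditDistance.

(* D^p(x, y) is the least total cost of an edit script turning x into y, a script being a
   sequence of substitutions and of insertions and deletions of whole gaps.  For the triangle
   inequality, optimal scripts x -> y and y -> z are merged into a script x -> z by induction
   on their lengths, looking at their last edits: two substitutions compose through the
   triangle inequality of d, while text inserted by the first script and deleted by the second
   cancels, W1-W8 bounding the cost of what is left.  Every merged edit is paid from two
   budgets, one charged to each original script, and Minkowski's inequality in l^p(R^2) turns
   this into cost^(1/p) <= D(x, y) + D(y, z).  Separation holds because gap penalties are
   positive and d separates points, so a script of cost zero only substitutes letters by
   themselves. *)

From Stdlib Require Import Reals List Lra Psatz Lia.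
Import ListNotations.
Open Scope R_scope.

Lemma rpow_ge0 x e : 0 <= rpow x e.
Proof. unfold rpow; destruct (Rlt_dec 0 x); [left; apply exp_pos | lra]. Qed.

Lemma rpow_Rpower x e : 0 < x -> rpow x e = Rpower x e.
Proof. intros Hx; unfold rpow; destruct (Rlt_dec 0 x); [reflexivity | lra]. Qed.

Lemma rpow_nonpos x e : x <= 0 -> rpow x e = 0.
Proof. intros Hx; unfold rpow; destruct (Rlt_dec 0 x); [lra | reflexivity]. Qed.

Lemma rpow_gt0 x e : 0 < x -> 0 < rpow x e.
Proof. intros Hx; rewrite rpow_Rpower by exact Hx; apply exp_pos. Qed.

Lemma rpow_eq0 x e : 0 <= x -> rpow x e = 0 -> x = 0.
Proof.
  intros Hx H0; destruct (Req_dec x 0) as [|Hx0]; [assumption|].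
  pose proof (rpow_gt0 x e); lra.
Qed.

Lemma rpow_le x y e : 0 < e -> 0 <= x <= y -> rpow x e <= rpow y e.
Proof.
  intros He [Hx Hxy]. destruct (Req_dec x 0) as [->|Hx0].
  - rewrite rpow_nonpos by lra; apply rpow_ge0.
  - rewrite !rpow_Rpower by lra; apply Rle_Rpower_l; lra.
Qed.

Lemma rpowK e x : 0 < e -> 0 <= x -> rpow (rpow x e) (/ e) = x.
Proof.
  intros He Hx. destruct (Req_dec x 0) as [->|Hx0].
  - rewrite (rpow_nonpos 0) by lra; apply rpow_nonpos; lra.
  - rewrite (rpow_Rpower x), rpow_Rpower, Rpower_mult by (try apply exp_pos; lra).
    rewrite Rinv_r by lra. apply Rpower_1; lra.
Qed.

Lemma rpow_mult x y e : 0 <= x -> 0 <= y -> rpow (x * y) e = rpow x e * rpow y e.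
Proof.
  intros Hx Hy. destruct (Req_dec x 0) as [->|Hx0].
  { rewrite Rmult_0_l, !(rpow_nonpos 0) by lra; ring. }
  destruct (Req_dec y 0) as [->|Hy0].
  { rewrite Rmult_0_r, !(rpow_nonpos 0) by lra; ring. }
  rewrite !rpow_Rpower by nra. symmetry; apply Rpower_mult_distr; lra.
Qed.

Lemma rpow_Rinv x e : 0 < x -> rpow (/ x) e = / rpow x e.
Proof.
  intros Hx. rewrite !rpow_Rpower by (try apply Rinv_0_lt_compat; lra).
  unfold Rpower. rewrite ln_Rinv, <- exp_Ropp by lra. f_equal; ring.
Qed.

Lemma rpow_div x y e : 0 <= x -> 0 < y -> rpow (x / y) e = rpow x e / rpow y e.
Proof.
  intros Hx Hy. unfold Rdiv.
  rewrite rpow_mult, rpow_Rinv; [reflexivity | exact Hy | exact Hx |].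
  left; apply Rinv_0_lt_compat; exact Hy.
Qed.

(* [ln y <= y - 1] at [y = s / m] and [y = 1 / m], where [m] is the weighted mean. *)
Lemma Rpower_le_weighted_mean s w : 0 < s -> 0 < w <= 1 ->
  Rpower s w <= w * s + (1 - w).
Proof.
  intros Hs Hw. set (m := w * s + (1 - w)).
  assert (Hm : 0 < m) by (unfold m; nra).
  assert (ln_le : forall y, 0 < y -> ln y <= y - 1).
  { intros y Hy. pose proof (exp_ineq1_le (ln y)) as E. rewrite exp_ln in E by exact Hy. lra. }
  pose proof (ln_le (s / m) ltac:(apply Rdiv_lt_0_compat; lra)) as H1.
  pose proof (ln_le (/ m) ltac:(apply Rinv_0_lt_compat; lra)) as H2.
  unfold Rdiv in H1; rewrite ln_mult, ln_Rinv in H1 by (try apply Rinv_0_lt_compat; lra).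
  rewrite ln_Rinv in H2 by lra.
  assert (Hmean : w * (s / m - 1) + (1 - w) * (/ m - 1) = 0) by (unfold m in *; field; lra).
  assert (Hln : w * ln s <= ln m) by nra.
  unfold Rpower. rewrite <- (exp_ln m) by exact Hm.
  destruct Hln as [Hlt|Heq]; [left; apply exp_increasing; lra | right; f_equal; lra].
Qed.

Section LpNorm.
Variable p : R.
Hypothesis Hp : 1 <= p.

Local Notation pw x := (rpow x p).
Local Notation rt x := (rpow x (/ p)).

Lemma rt_ge0 x : 0 <= rt x. Proof. apply rpow_ge0. Qed.

Lemma rt_le x y : 0 <= x <= y -> rt x <= rt y.
Proof. apply rpow_le, Rinv_0_lt_compat; lra. Qed.

Lemma pw_le x y : 0 <= x <= y -> pw x <= pw y.
Proof. apply rpow_le; lra. Qed.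

Lemma rt_pw x : 0 <= x -> rt (pw x) = x.
Proof. apply rpowK; lra. Qed.

Lemma pw_rt x : 0 <= x -> pw (rt x) = x.
Proof.
  intros Hx. rewrite <- (Rinv_inv p) at 2.
  apply rpowK; [apply Rinv_0_lt_compat; lra | exact Hx].
Qed.

Lemma pw0 : pw 0 = 0. Proof. apply rpow_nonpos; lra. Qed.

Lemma bernoulli t : 0 <= t -> 1 + p * (t - 1) <= pw t.
Proof.
  intros Ht. destruct (Req_dec t 0) as [->|Ht0]; [rewrite pw0; lra|].
  assert (Hs : 0 < pw t) by (apply rpow_gt0; lra).
  assert (Hw : 0 < / p <= 1).
  { split; [apply Rinv_0_lt_compat; lra | rewrite <- Rinv_1; apply Rinv_le_contravar; lra]. }
  pose proof (Rpower_le_weighted_mean (pw t) (/ p) Hs Hw) as H.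
  rewrite <- rpow_Rpower, rt_pw in H by lra.
  apply (Rmult_le_compat_l p) in H; [|lra].
  replace (p * (/ p * pw t + (1 - / p))) with (pw t + p - 1) in H by (field; lra).
  lra.
Qed.

Lemma pw_convex l u v : 0 <= l <= 1 -> 0 <= u -> 0 <= v ->
  pw (l * u + (1 - l) * v) <= l * pw u + (1 - l) * pw v.
Proof.
  intros Hl Hu Hv. set (m := l * u + (1 - l) * v).
  assert (Hm0 : 0 <= m) by (unfold m; nra).
  destruct (Req_dec m 0) as [Hm|Hm].
  { rewrite Hm, pw0. pose proof (rpow_ge0 u p); pose proof (rpow_ge0 v p); nra. }
  (* Bernoulli at [x / m]: [pw] lies above its tangent line at [m]. *)
  assert (tangent : forall x, 0 <= x -> pw m * (1 + p * (x / m - 1)) <= pw x).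
  { intros x Hx. replace x with (m * (x / m)) at 2 by (field; lra).
    assert (Hxm : 0 <= x / m) by (apply Rle_mult_inv_pos; lra).
    rewrite rpow_mult by lra.
    apply Rmult_le_compat_l; [apply rpow_ge0 | apply bernoulli; exact Hxm]. }
  pose proof (tangent u Hu) as Tu; pose proof (tangent v Hv) as Tv.
  assert (E : l * (u / m - 1) + (1 - l) * (v / m - 1) = 0) by (unfold m in *; field; lra).
  apply Rle_trans with
    (l * (pw m * (1 + p * (u / m - 1))) + (1 - l) * (pw m * (1 + p * (v / m - 1)))).
  - right. transitivity (pw m * (1 + p * (l * (u / m - 1) + (1 - l) * (v / m - 1)))); [|ring].
    rewrite E; ring.
  - apply Rplus_le_compat; apply Rmult_le_compat_l; lra.
Qed.

Lemma minkowski2 a b c e : 0 <= a -> 0 <= b -> 0 <= c -> 0 <= e ->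
  rt (pw (a + b) + pw (c + e)) <= rt (pw a + pw c) + rt (pw b + pw e).
Proof.
  intros Ha Hb Hc He.
  pose proof (rpow_ge0 a p); pose proof (rpow_ge0 b p).
  pose proof (rpow_ge0 c p); pose proof (rpow_ge0 e p).
  set (A := rt (pw a + pw c)); set (B := rt (pw b + pw e)).
  assert (HA : pw A = pw a + pw c) by (apply pw_rt; lra).
  assert (HB : pw B = pw b + pw e) by (apply pw_rt; lra).
  assert (A_ge0 : 0 <= A) by apply rt_ge0.
  assert (B_ge0 : 0 <= B) by apply rt_ge0.
  rewrite <- (rt_pw (A + B)) by lra.
  apply rt_le; split.
  { pose proof (rpow_ge0 (a + b) p); pose proof (rpow_ge0 (c + e) p); lra. }
  destruct (Req_dec A 0) as [A0|A0].
  { rewrite A0, pw0 in HA.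
    assert (a = 0) by (apply (rpow_eq0 a p); lra).
    assert (c = 0) by (apply (rpow_eq0 c p); lra).
    subst a c; rewrite A0, !Rplus_0_l; lra. }
  destruct (Req_dec B 0) as [B0|B0].
  { rewrite B0, pw0 in HB.
    assert (b = 0) by (apply (rpow_eq0 b p); lra).
    assert (e = 0) by (apply (rpow_eq0 e p); lra).
    subst b e; rewrite B0, !Rplus_0_r; lra. }
  assert (HAp : 0 < pw A) by (apply rpow_gt0; lra).
  assert (HBp : 0 < pw B) by (apply rpow_gt0; lra).
  set (l := A / (A + B)).
  assert (Hl : 0 <= l <= 1).
  { unfold l; split; [apply Rle_mult_inv_pos; lra|].
    apply Rmult_le_reg_r with (A + B); [lra|]. field_simplify; lra. }
  (* [x + y] is the convex combination, with weight [l], of the normalised [x / A] and [y / B]. *)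
  assert (split : forall x y, 0 <= x -> 0 <= y ->
            pw (x + y) <= pw (A + B) * (l * (pw x / pw A) + (1 - l) * (pw y / pw B))).
  { intros x y Hx Hy.
    replace (x + y) with ((A + B) * (l * (x / A) + (1 - l) * (y / B))) by (unfold l; field; lra).
    assert (0 <= x / A) by (apply Rle_mult_inv_pos; lra).
    assert (0 <= y / B) by (apply Rle_mult_inv_pos; lra).
    rewrite rpow_mult, <- !rpow_div by nra.
    apply Rmult_le_compat_l; [apply rpow_ge0 | apply pw_convex; assumption]. }
  pose proof (split a b Ha Hb) as Hab; pose proof (split c e Hc He) as Hce.
  assert (Hsum : l * (pw a / pw A) + (1 - l) * (pw b / pw B)
                 + (l * (pw c / pw A) + (1 - l) * (pw e / pw B)) = 1).
  { rewrite HA, HB in *. field; lra. }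
  pose proof (rpow_ge0 (A + B) p). nra.
Qed.

Lemma rt_add_le x y : 0 <= x -> 0 <= y -> rt (x + y) <= rt x + rt y.
Proof.
  intros Hx Hy.
  pose proof (minkowski2 (rt x) 0 0 (rt y) (rt_ge0 x) (Rle_refl 0) (Rle_refl 0) (rt_ge0 y)) as H.
  rewrite !Rplus_0_r, !Rplus_0_l, pw0, !pw_rt, Rplus_0_r, Rplus_0_l in H by assumption.
  exact H.
Qed.

(* Minkowski for [(rt s, e) <= (rt x, a) + (rt y, b)] coordinatewise. *)
Lemma rt_add_pw_le s x y e a b : 0 <= s -> 0 <= x -> 0 <= y -> 0 <= e -> 0 <= a -> 0 <= b ->
  rt s <= rt x + rt y -> e <= a + b -> rt (s + pw e) <= rt (x + pw a) + rt (y + pw b).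
Proof.
  intros Hs Hx Hy He Ha Hb Hsxy Heab.
  pose proof (minkowski2 (rt x) (rt y) a b (rt_ge0 x) (rt_ge0 y) Ha Hb) as M.
  rewrite !pw_rt in M by assumption.
  eapply Rle_trans; [|exact M].
  apply rt_le; split; [pose proof (rpow_ge0 e p); lra|].
  apply Rplus_le_compat.
  - rewrite <- (pw_rt s) at 1 by exact Hs.
    apply pw_le; split; [apply rt_ge0 | exact Hsxy].
  - apply pw_le; lra.
Qed.

Lemma rt_add_le_add s x y c a b : 0 <= s -> 0 <= x -> 0 <= y -> 0 <= c -> 0 <= a -> 0 <= b ->
  rt s <= rt x + rt y -> c <= a + b -> rt (s + c) <= rt (x + a) + rt (y + b).
Proof.
  intros Hs Hx Hy Hc Ha Hb Hsxy Hcab.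
  rewrite <- (pw_rt c), <- (pw_rt a), <- (pw_rt b) by assumption.
  apply rt_add_pw_le; try apply rt_ge0; try assumption.
  apply Rle_trans with (rt (a + b)); [apply rt_le; lra | apply rt_add_le; assumption].
Qed.

End LpNorm.

Lemma budget_split a c x y : 0 <= a -> 0 <= c -> 0 <= x -> 0 <= y -> a + c <= x + y ->
  exists x1 y1 x2 y2, 0 <= x1 /\ 0 <= y1 /\ 0 <= x2 /\ 0 <= y2 /\
    a <= x1 + y1 /\ c <= x2 + y2 /\ x1 + x2 <= x /\ y1 + y2 <= y.
Proof.
  intros Ha Hc Hx Hy Hac. destruct (Req_dec (x + y) 0) as [E|E].
  { exists 0, 0, 0, 0; lra. }
  set (t := a / (x + y)).
  assert (Ht : 0 <= t <= 1).
  { unfold t; split; [apply Rle_mult_inv_pos; lra|].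
    apply Rmult_le_reg_r with (x + y); [lra|]. field_simplify; lra. }
  assert (Hat : a = t * (x + y)) by (unfold t; field; lra).
  exists (t * x), (t * y), (x - t * x), (y - t * y); repeat split; nra.
Qed.

Lemma flat_map_map {T U V} (f : U -> list V) (g : T -> U) L :
  flat_map f (map g L) = flat_map (fun x => f (g x)) L.
Proof. induction L as [|x L IH]; simpl; [reflexivity | now rewrite IH]. Qed.

Lemma flat_map_eq_app {T U} (f : T -> list U) L y1 y2 : flat_map f L = y1 ++ y2 ->
  (exists L1 L2, L = L1 ++ L2 /\ flat_map f L1 = y1 /\ flat_map f L2 = y2) \/
  (exists L1 x L2 t1 t2, L = L1 ++ x :: L2 /\ f x = t1 ++ t2 /\ t1 <> [] /\ t2 <> [] /\
     flat_map f L1 ++ t1 = y1 /\ t2 ++ flat_map f L2 = y2).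
Proof.
  revert y1 y2; induction L as [|x L IH]; intros y1 y2 H; simpl in H.
  - left; exists [], []. symmetry in H; apply app_eq_nil in H as [-> ->]; auto.
  - destruct (app_eq_app _ _ _ _ H) as [l [[E1 E2]|[E1 E2]]].
    + destruct l as [|c l].
      { left; exists [x], L. rewrite app_nil_r in E1. simpl; rewrite app_nil_r; subst; auto. }
      destruct y1 as [|c1 y1].
      { left; exists [], (x :: L). simpl in *; subst; auto. }
      right; exists [], x, L, (c1 :: y1), (c :: l). simpl; subst y2.
      repeat split; try discriminate; assumption.
    + destruct (IH _ _ E2) as [(L1 & L2 & -> & <- & <-)
        | (L1 & z & L2 & t1 & t2 & -> & h1 & h2 & h3 & <- & <-)].
      * left; exists (x :: L1), L2; subst; auto.
      * right; exists (x :: L1), z, L2, t1, t2; subst; simpl.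
        rewrite <- app_assoc; repeat split; assumption.
Qed.

Lemma nil_or_snoc {T} (L : list T) : L = [] \/ exists L' x, L = L' ++ [x].
Proof. induction L as [|x L _] using rev_ind; [left | right; exists L, x]; reflexivity. Qed.

Lemma length_snoc {T} (L : list T) c : length (L ++ [c]) = S (length L).
Proof. rewrite length_app; simpl; lia. Qed.

Lemma rev_eq_nil {T} (l : list T) : rev l = [] -> l = [].
Proof. intros H. rewrite <- (rev_involutive l), H. reflexivity. Qed.

Lemma rev_eq_cons {T} (l : list T) a r : rev l = a :: r -> l = rev r ++ [a].
Proof. intros H. rewrite <- (rev_involutive l), H. reflexivity. Qed.

Lemma fold_right_Rmin_le_init b L : fold_right Rmin b L <= b.
Proof.
  induction L as [|a L IH]; simpl; [lra | pose proof (Rmin_r a (fold_right Rmin b L)); lra].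
Qed.

Lemma fold_right_Rmin_le_In b L z : In z L -> fold_right Rmin b L <= z.
Proof.
  induction L as [|a L IH]; simpl; [tauto|]. intros [->|H]; [apply Rmin_l|].
  pose proof (Rmin_r a (fold_right Rmin b L)); pose proof (IH H); lra.
Qed.

Lemma fold_right_Rmin_cases b L : fold_right Rmin b L = b \/ In (fold_right Rmin b L) L.
Proof.
  induction L as [|a L IH]; simpl; [auto|].
  destruct (Rle_dec a (fold_right Rmin b L)).
  - rewrite Rmin_left by assumption; right; left; reflexivity.
  - rewrite Rmin_right by lra. destruct IH; [left | right; right]; assumption.
Qed.

Section EditScripts.
Variables (Sigma : Type) (d : Sigma -> Sigma -> R) (alpha beta : list Sigma -> R) (p : R).
Hypothesis Hp : 1 <= p.

Local Notation pw x := (rpow x p).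
Local Notation rt x := (rpow x (/ p)).

(* Insertions and deletions act on a whole gap, a nonempty word written [a :: w]. *)
Inductive edit :=
  | Sub (a b : Sigma)
  | Ins (a : Sigma) (w : list Sigma)
  | Del (a : Sigma) (w : list Sigma).

Definition edit_src e := match e with Sub a _ => [a] | Ins _ _ => [] | Del a w => a :: w end.
Definition edit_tgt e := match e with Sub _ b => [b] | Ins a w => a :: w | Del _ _ => [] end.

Definition ins_cost w := pw (ext0 alpha w).
Definition del_cost w := pw (ext0 beta w).
Definition edit_cost e :=
  match e with
  | Sub a b => pw (d a b)
  | Ins a w => ins_cost (a :: w)
  | Del a w => del_cost (a :: w)
  end.

Definition script_src (A : list edit) := flat_map edit_src A.
Definition script_tgt (A : list edit) := flat_map edit_tgt A.
Fixpoint script_cost (A : list edit) : R :=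
  match A with [] => 0 | e :: A' => edit_cost e + script_cost A' end.

Lemma script_src_app A B : script_src (A ++ B) = script_src A ++ script_src B.
Proof. apply flat_map_app. Qed.
Lemma script_tgt_app A B : script_tgt (A ++ B) = script_tgt A ++ script_tgt B.
Proof. apply flat_map_app. Qed.
Lemma script_cost_app A B : script_cost (A ++ B) = script_cost A + script_cost B.
Proof. induction A as [|e A IH]; simpl; [ring | rewrite IH; ring]. Qed.

Lemma ins_cost_ge0 w : 0 <= ins_cost w. Proof. apply rpow_ge0. Qed.
Lemma del_cost_ge0 w : 0 <= del_cost w. Proof. apply rpow_ge0. Qed.
Lemma ins_cost_nil : ins_cost [] = 0. Proof. apply rpow_nonpos; simpl; lra. Qed.
Lemma del_cost_nil : del_cost [] = 0. Proof. apply rpow_nonpos; simpl; lra. Qed.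
Lemma edit_cost_ge0 e : 0 <= edit_cost e. Proof. destruct e; apply rpow_ge0. Qed.
Lemma script_cost_ge0 A : 0 <= script_cost A.
Proof. induction A as [|e A IH]; simpl; [lra | pose proof (edit_cost_ge0 e); lra]. Qed.

Definition ins_script w := match w with [] => [] | a :: w' => [Ins a w'] end.
Definition del_script w := match w with [] => [] | a :: w' => [Del a w'] end.

Lemma ins_script_spec w : script_src (ins_script w) = [] /\ script_tgt (ins_script w) = w /\
  script_cost (ins_script w) = ins_cost w.
Proof.
  destruct w as [|a w]; simpl; [rewrite ins_cost_nil | rewrite !app_nil_r]; repeat split; ring.
Qed.

Lemma del_script_spec w : script_src (del_script w) = w /\ script_tgt (del_script w) = [] /\
  script_cost (del_script w) = del_cost w.
Proof.
  destruct w as [|a w]; simpl; [rewrite del_cost_nil | rewrite !app_nil_r]; repeat split; ring.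
Qed.

(* [X] and [Y] are the parts of the cost charged to the first and to the second of two
   scripts being composed. *)
Definition within_budget x z X Y := 0 <= X /\ 0 <= Y /\
  exists A, script_src A = x /\ script_tgt A = z /\ rt (script_cost A) <= rt X + rt Y.

Lemma within_budget_le x z X Y X' Y' :
  within_budget x z X Y -> X <= X' -> Y <= Y' -> within_budget x z X' Y'.
Proof.
  intros [HX [HY [A [Hs [Ht HA]]]]] HXX HYY. split; [lra | split; [lra|]].
  exists A; repeat split; try assumption.
  pose proof (rt_le p Hp X X'); pose proof (rt_le p Hp Y Y'); lra.
Qed.

Lemma within_budget_app x z X Y B P Q :
  within_budget x z X Y -> 0 <= P -> 0 <= Q -> script_cost B <= P + Q ->
  within_budget (x ++ script_src B) (z ++ script_tgt B) (X + P) (Y + Q).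
Proof.
  intros [HX [HY [A [Hs [Ht HA]]]]] HP HQ HB. split; [lra | split; [lra|]].
  exists (A ++ B). rewrite script_src_app, script_tgt_app, script_cost_app, Hs, Ht.
  repeat split. apply rt_add_le_add; auto using script_cost_ge0.
Qed.

Lemma within_budget_del x z X Y w P Q :
  within_budget x z X Y -> 0 <= P -> 0 <= Q -> del_cost w <= P + Q ->
  within_budget (x ++ w) z (X + P) (Y + Q).
Proof.
  intros H HP HQ Hw. destruct (del_script_spec w) as [Hs [Ht Hc]].
  rewrite <- Hs, <- (app_nil_r z), <- Ht. apply within_budget_app; congruence.
Qed.

Lemma within_budget_ins x z X Y w P Q :
  within_budget x z X Y -> 0 <= P -> 0 <= Q -> ins_cost w <= P + Q ->
  within_budget x (z ++ w) (X + P) (Y + Q).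
Proof.
  intros H HP HQ Hw. destruct (ins_script_spec w) as [Hs [Ht Hc]].
  rewrite <- Ht, <- (app_nil_r x), <- Hs. apply within_budget_app; congruence.
Qed.

Lemma within_budget_sub x z X Y a c u v :
  within_budget x z X Y -> 0 <= u -> 0 <= v -> 0 <= d a c -> d a c <= u + v ->
  within_budget (x ++ [a]) (z ++ [c]) (X + pw u) (Y + pw v).
Proof.
  intros [HX [HY [A [Hs [Ht HA]]]]] Hu Hv Hac Huv.
  pose proof (rpow_ge0 u p); pose proof (rpow_ge0 v p).
  split; [lra | split; [lra|]].
  exists (A ++ [Sub a c]). rewrite script_src_app, script_tgt_app, script_cost_app, Hs, Ht.
  simpl; rewrite Rplus_0_r. repeat split.
  apply rt_add_pw_le; auto using script_cost_ge0.
Qed.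

Record charged := Charged { charged_edit : edit; charge1 : R; charge2 : R }.

Definition edits (L : list charged) := map charged_edit L.
Definition total1 (L : list charged) := fold_right (fun c s => charge1 c + s) 0 L.
Definition total2 (L : list charged) := fold_right (fun c s => charge2 c + s) 0 L.

Lemma edits_app L M : edits (L ++ M) = edits L ++ edits M. Proof. apply map_app. Qed.
Lemma total1_app L M : total1 (L ++ M) = total1 L + total1 M.
Proof. induction L as [|c L IH]; simpl; [ring | rewrite IH; ring]. Qed.
Lemma total2_app L M : total2 (L ++ M) = total2 L + total2 M.
Proof. induction L as [|c L IH]; simpl; [ring | rewrite IH; ring]. Qed.

Definition covered c :=
  0 <= charge1 c /\ 0 <= charge2 c /\ edit_cost (charged_edit c) <= charge1 c + charge2 c.

(* Substitutions are never shared between budgets, so that composing [a -> b] with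
   [b -> c] only needs [d a c <= d a b + d b c] (within_budget_sub). *)
Definition left_charged c :=
  covered c /\ forall a b, charged_edit c = Sub a b -> pw (d a b) <= charge1 c.
Definition right_charged c :=
  covered c /\ forall a b, charged_edit c = Sub a b -> pw (d a b) <= charge2 c.

Lemma left_charged_covered L : Forall left_charged L -> Forall covered L.
Proof. apply Forall_impl; intros c [Hc _]; exact Hc. Qed.
Lemma right_charged_covered L : Forall right_charged L -> Forall covered L.
Proof. apply Forall_impl; intros c [Hc _]; exact Hc. Qed.

Lemma covered_totals L : Forall covered L ->
  0 <= total1 L /\ 0 <= total2 L /\ script_cost (edits L) <= total1 L + total2 L.
Proof. induction 1 as [|c L [? [? ?]] _ IH]; simpl; lra. Qed.

Lemma within_budget_covered L : Forall covered L ->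
  within_budget (script_src (edits L)) (script_tgt (edits L)) (total1 L) (total2 L).
Proof.
  intros HL. destruct (covered_totals L HL) as [H1 [H2 H12]].
  split; [exact H1 | split; [exact H2|]]. exists (edits L); repeat split.
  apply Rle_trans with (rt (total1 L + total2 L)).
  - apply rt_le; [exact Hp | split; [apply script_cost_ge0 | exact H12]].
  - apply rt_add_le; assumption.
Qed.

Lemma charged_tgt_split L y1 y2 : script_tgt (edits L) = y1 ++ y2 ->
  (exists L1 L2, L = L1 ++ L2 /\ script_tgt (edits L1) = y1 /\ script_tgt (edits L2) = y2) \/
  (exists L1 a w P Q L2 t1 t2, L = L1 ++ Charged (Ins a w) P Q :: L2 /\ a :: w = t1 ++ t2 /\
     t1 <> [] /\ t2 <> [] /\ script_tgt (edits L1) ++ t1 = y1 /\ t2 ++ script_tgt (edits L2) = y2).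
Proof.
  unfold script_tgt, edits; rewrite flat_map_map; intros H.
  destruct (flat_map_eq_app _ _ _ _ H)
    as [(L1 & L2 & HL) | (L1 & [[a b|a w|a w] P Q] & L2 & t1 & t2 & H')].
  - left; exists L1, L2; rewrite !flat_map_map; exact HL.
  - exfalso; destruct H' as [_ [Hab [Ht1 [Ht2 _]]]]; simpl in Hab.
    destruct t1 as [|? [|]], t2; simpl in Hab; congruence.
  - right; exists L1, a, w, P, Q, L2, t1, t2; rewrite !flat_map_map; exact H'.
  - exfalso; destruct H' as [_ [Hab [Ht1 _]]]; simpl in Hab.
    destruct t1; simpl in Hab; congruence.
Qed.

Lemma charged_src_split L y1 y2 : script_src (edits L) = y1 ++ y2 ->
  (exists L1 L2, L = L1 ++ L2 /\ script_src (edits L1) = y1 /\ script_src (edits L2) = y2) \/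
  (exists L1 a w P Q L2 t1 t2, L = L1 ++ Charged (Del a w) P Q :: L2 /\ a :: w = t1 ++ t2 /\
     t1 <> [] /\ t2 <> [] /\ script_src (edits L1) ++ t1 = y1 /\ t2 ++ script_src (edits L2) = y2).
Proof.
  unfold script_src, edits; rewrite flat_map_map; intros H.
  destruct (flat_map_eq_app _ _ _ _ H)
    as [(L1 & L2 & HL) | (L1 & [[a b|a w|a w] P Q] & L2 & t1 & t2 & H')].
  - left; exists L1, L2; rewrite !flat_map_map; exact HL.
  - exfalso; destruct H' as [_ [Hab [Ht1 [Ht2 _]]]]; simpl in Hab.
    destruct t1 as [|? [|]], t2; simpl in Hab; congruence.
  - exfalso; destruct H' as [_ [Hab [Ht1 _]]]; simpl in Hab.
    destruct t1; simpl in Hab; congruence.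
  - right; exists L1, a, w, P, Q, L2, t1, t2; rewrite !flat_map_map; exact H'.
Qed.

Hypothesis W1 : forall (a b : Sigma) (u v : list Sigma),
  pw (d a b) + del_cost (u ++ b :: v) >= del_cost (u ++ a :: v).
Hypothesis W2 : forall (a b : Sigma) (u v : list Sigma),
  pw (d a b) + ins_cost (u ++ a :: v) >= ins_cost (u ++ b :: v).
Hypothesis W3 : forall u v x : list Sigma,
  del_cost (u ++ v) + del_cost x >= del_cost (u ++ x ++ v).
Hypothesis W4 : forall u v x : list Sigma,
  ins_cost (u ++ v) + ins_cost x >= ins_cost (u ++ x ++ v).
Hypothesis W5 : forall u v x : list Sigma,
  del_cost (u ++ x ++ v) + ins_cost x >= del_cost (u ++ v).
Hypothesis W6 : forall u v x : list Sigma,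
  ins_cost (u ++ x ++ v) + del_cost x >= ins_cost (u ++ v).
Hypothesis W7 : forall u v x : list Sigma,
  ins_cost (u ++ x) + del_cost (x ++ v) >= ins_cost u + del_cost v.
Hypothesis W8 : forall u v x : list Sigma,
  del_cost (u ++ x) + ins_cost (x ++ v) >= del_cost u + ins_cost v.

(* Each edit of the script is absorbed by W1, W5 or W3. *)
Lemma del_cost_src_le A u v :
  del_cost (u ++ script_src A ++ v) <= script_cost A + del_cost (u ++ script_tgt A ++ v).
Proof.
  revert u; induction A as [|[a b|a w|a w] A IH]; intros u; simpl; [lra | | |].
  - specialize (IH (u ++ [b])); pose proof (W1 a b u (script_src A ++ v)).
    simpl in *; rewrite <- !app_assoc in *; simpl in *; lra.
  - specialize (IH (u ++ a :: w)); pose proof (W5 u (script_src A ++ v) (a :: w)).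
    simpl in *; rewrite <- !app_assoc in *; simpl in *; lra.
  - specialize (IH u); pose proof (W3 u (script_src A ++ v) (a :: w)).
    simpl in *; rewrite <- !app_assoc in *; simpl in *; lra.
Qed.

Lemma ins_cost_tgt_le A u v :
  ins_cost (u ++ script_tgt A ++ v) <= script_cost A + ins_cost (u ++ script_src A ++ v).
Proof.
  revert u; induction A as [|[a b|a w|a w] A IH]; intros u; simpl; [lra | | |].
  - specialize (IH (u ++ [a])); pose proof (W2 a b u (script_tgt A ++ v)).
    simpl in *; rewrite <- !app_assoc in *; simpl in *; lra.
  - specialize (IH u); pose proof (W4 u (script_tgt A ++ v) (a :: w)).
    simpl in *; rewrite <- !app_assoc in *; simpl in *; lra.
  - specialize (IH (u ++ a :: w)); pose proof (W6 u (script_tgt A ++ v) (a :: w)).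
    simpl in *; rewrite <- !app_assoc in *; simpl in *; lra.
Qed.

Local Notation csrc L := (script_src (edits L)).
Local Notation ctgt L := (script_tgt (edits L)).

Lemma csrc_snoc L c : csrc (L ++ [c]) = csrc L ++ edit_src (charged_edit c).
Proof. rewrite edits_app, script_src_app; simpl; rewrite app_nil_r; reflexivity. Qed.
Lemma ctgt_snoc L c : ctgt (L ++ [c]) = ctgt L ++ edit_tgt (charged_edit c).
Proof. rewrite edits_app, script_tgt_app; simpl; rewrite app_nil_r; reflexivity. Qed.
Lemma total1_snoc L c : total1 (L ++ [c]) = total1 L + charge1 c.
Proof. rewrite total1_app; simpl; ring. Qed.
Lemma total2_snoc L c : total2 (L ++ [c]) = total2 L + charge2 c.
Proof. rewrite total2_app; simpl; ring. Qed.

Definition composable_below n := forall L1 L2, (length L1 + length L2 < n)%nat ->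
  Forall left_charged L1 -> Forall right_charged L2 -> ctgt L1 = csrc L2 ->
  within_budget (csrc L1) (ctgt L2) (total1 L1 + total1 L2) (total2 L1 + total2 L2).

(* If the first script produces [c :: w]
   by whole edits, their sources are deleted instead (del_cost_src_le); otherwise an
   insertion [t1 ++ t2] straddles the cut and is shortened to [t1] (W7). *)
Lemma compose_del_last n L1 B2 c w P Q : composable_below n ->
  (length L1 + length B2 < n)%nat -> Forall left_charged L1 -> Forall right_charged B2 ->
  0 <= P -> 0 <= Q -> del_cost (c :: w) <= P + Q -> ctgt L1 = csrc B2 ++ c :: w ->
  within_budget (csrc L1) (ctgt B2) (total1 L1 + total1 B2 + P) (total2 L1 + total2 B2 + Q).
Proof.
  intros IH Hn HL1 HB2 HP HQ Hcw Ht.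
  destruct (charged_tgt_split L1 _ _ Ht) as [(M1 & M2 & -> & Ht1 & Ht2)
    | (M1 & a & w0 & P' & Q' & M2 & t1 & t2 & -> & Ht12 & Ht1 & Ht2 & Hy1 & Hy2)].
  - apply Forall_app in HL1 as [HM1 HM2].
    destruct (covered_totals M2 (left_charged_covered _ HM2)) as [H1 [H2 H12]].
    rewrite length_app in Hn.
    pose proof (IH M1 B2 ltac:(lia) HM1 HB2 Ht1) as G.
    pose proof (del_cost_src_le (edits M2) [] []) as Hdel.
    rewrite !app_nil_l, !app_nil_r, Ht2 in Hdel.
    rewrite edits_app, script_src_app, total1_app, total2_app.
    eapply within_budget_le;
      [apply (within_budget_del _ _ _ _ _ (total1 M2 + P) (total2 M2 + Q) G) | |]; lra.
  - apply Forall_app in HL1 as [HM1 HxM2].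
    apply Forall_cons_iff in HxM2 as [[[HP' [HQ' Hc']] _] HM2]; simpl in HP', HQ', Hc'.
    destruct t1 as [|a1 t1]; [congruence|].
    destruct (covered_totals M2 (left_charged_covered _ HM2)) as [H1 [H2 H12]].
    pose proof (del_cost_src_le (edits M2) t2 []) as Hdel.
    rewrite !app_nil_r, Hy2 in Hdel.
    pose proof (W7 (a1 :: t1) (csrc M2) t2) as Hw7. rewrite <- Ht12 in Hw7.
    destruct (budget_split (ins_cost (a1 :: t1)) (del_cost (csrc M2))
                (P' + total1 M2 + P) (Q' + total2 M2 + Q))
      as (x1 & y1 & x2 & y2 & Hx1 & Hy1' & Hx2 & Hy2' & Hins & Hdel' & Hx & Hy);
      try apply ins_cost_ge0; try apply del_cost_ge0; try lra.
    assert (HL : Forall left_charged (M1 ++ [Charged (Ins a1 t1) x1 y1])).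
    { apply Forall_app; split; [exact HM1|].
      constructor; [|constructor].
      split; [repeat split; assumption | intros ? ? E; discriminate E]. }
    rewrite length_app in Hn; simpl in Hn.
    pose proof (IH (M1 ++ [Charged (Ins a1 t1) x1 y1]) B2) as G.
    rewrite length_snoc, ctgt_snoc, csrc_snoc, total1_snoc, total2_snoc in G; simpl in G.
    rewrite app_nil_r in G; specialize (G ltac:(lia) HL HB2 Hy1).
    rewrite edits_app, script_src_app, total1_app, total2_app; simpl.
    eapply within_budget_le; [apply (within_budget_del _ _ _ _ _ x2 y2 G) | |]; lra.
Qed.

(* Mirror image of compose_del_last, with W8 in place of W7. *)
Lemma compose_ins_last n B1 L2 c w P Q : composable_below n ->
  (length B1 + length L2 < n)%nat -> Forall left_charged B1 -> Forall right_charged L2 ->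
  0 <= P -> 0 <= Q -> ins_cost (c :: w) <= P + Q -> ctgt B1 ++ c :: w = csrc L2 ->
  within_budget (csrc B1) (ctgt L2) (total1 B1 + total1 L2 + P) (total2 B1 + total2 L2 + Q).
Proof.
  intros IH Hn HB1 HL2 HP HQ Hcw Ht.
  destruct (charged_src_split L2 _ _ (eq_sym Ht)) as [(M1 & M2 & -> & Hs1 & Hs2)
    | (M1 & a & w0 & P' & Q' & M2 & t1 & t2 & -> & Ht12 & Ht1 & Ht2 & Hy1 & Hy2)].
  - apply Forall_app in HL2 as [HM1 HM2].
    destruct (covered_totals M2 (right_charged_covered _ HM2)) as [H1 [H2 H12]].
    rewrite length_app in Hn.
    pose proof (IH B1 M1 ltac:(lia) HB1 HM1 (eq_sym Hs1)) as G.
    pose proof (ins_cost_tgt_le (edits M2) [] []) as Hins.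
    rewrite !app_nil_l, !app_nil_r, Hs2 in Hins.
    rewrite edits_app, script_tgt_app, total1_app, total2_app.
    eapply within_budget_le;
      [apply (within_budget_ins _ _ _ _ _ (total1 M2 + P) (total2 M2 + Q) G) | |]; lra.
  - apply Forall_app in HL2 as [HM1 HxM2].
    apply Forall_cons_iff in HxM2 as [[[HP' [HQ' Hc']] _] HM2]; simpl in HP', HQ', Hc'.
    destruct t1 as [|a1 t1]; [congruence|].
    destruct (covered_totals M2 (right_charged_covered _ HM2)) as [H1 [H2 H12]].
    pose proof (ins_cost_tgt_le (edits M2) t2 []) as Hins.
    rewrite !app_nil_r, Hy2 in Hins.
    pose proof (W8 (a1 :: t1) (ctgt M2) t2) as Hw8. rewrite <- Ht12 in Hw8.
    destruct (budget_split (del_cost (a1 :: t1)) (ins_cost (ctgt M2))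
                (P' + total1 M2 + P) (Q' + total2 M2 + Q))
      as (x1 & y1 & x2 & y2 & Hx1 & Hy1' & Hx2 & Hy2' & Hdel & Hins' & Hx & Hy);
      try apply ins_cost_ge0; try apply del_cost_ge0; try lra.
    assert (HL : Forall right_charged (M1 ++ [Charged (Del a1 t1) x1 y1])).
    { apply Forall_app; split; [exact HM1|].
      constructor; [|constructor].
      split; [repeat split; assumption | intros ? ? E; discriminate E]. }
    rewrite length_app in Hn; simpl in Hn.
    pose proof (IH B1 (M1 ++ [Charged (Del a1 t1) x1 y1])) as G.
    rewrite length_snoc, ctgt_snoc, csrc_snoc, total1_snoc, total2_snoc in G; simpl in G.
    rewrite app_nil_r in G; specialize (G ltac:(lia) HB1 HL (eq_sym Hy1)).
    rewrite edits_app, script_tgt_app, total1_app, total2_app; simpl.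
    eapply within_budget_le; [apply (within_budget_ins _ _ _ _ _ x2 y2 G) | |]; lra.
Qed.

Hypothesis Hdq : quasi_metric d.

Lemma composable_below_all n : composable_below n.
Proof.
  destruct Hdq as [d_ge0 [_ d_tri]].
  induction n as [|n IH]; intros L1 L2 Hn HL1 HL2 Ht; [lia|].
  destruct (nil_or_snoc L1) as [->|(B1 & [e1 P1 Q1] & ->)].
  { simpl in Ht |- *; rewrite Ht.
    eapply within_budget_le; [apply within_budget_covered, right_charged_covered, HL2 | |]; lra. }
  destruct (nil_or_snoc L2) as [->|(B2 & [e2 P2 Q2] & ->)].
  { simpl in Ht |- *; rewrite <- Ht.
    eapply within_budget_le; [apply within_budget_covered, left_charged_covered, HL1 | |]; lra. }
  pose proof HL1 as HL1'; pose proof HL2 as HL2'.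
  apply Forall_app in HL1' as [HB1 Hx1]; apply Forall_app in HL2' as [HB2 Hx2].
  apply Forall_cons_iff in Hx1 as [[[HP1 [HQ1 Hc1]] Hs1] _].
  apply Forall_cons_iff in Hx2 as [[[HP2 [HQ2 Hc2]] Hs2] _].
  simpl in HP1, HQ1, Hc1, Hs1, HP2, HQ2, Hc2, Hs2.
  rewrite !length_snoc in Hn.
  rewrite !csrc_snoc, !ctgt_snoc, !total1_snoc, !total2_snoc in *.
  destruct e1 as [a b|c w|c w]; [destruct e2 as [b' e|c w|c w] | |];
    simpl in Ht, Hc1, Hc2 |- *; rewrite ?app_nil_r in Ht; rewrite ?app_nil_r.
  - apply app_inj_tail in Ht as [Ht <-].
    pose proof (IH B1 B2 ltac:(lia) HB1 HB2 Ht) as G.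
    specialize (Hs1 a b eq_refl); specialize (Hs2 b e eq_refl).
    eapply within_budget_le; [apply (within_budget_sub _ _ _ _ a e (d a b) (d b e) G) | |];
      auto; pose proof (rpow_ge0 (d a b) p); pose proof (rpow_ge0 (d b e) p); lra.
  - pose proof (IH (B1 ++ [Charged (Sub a b) P1 Q1]) B2) as G.
    rewrite length_snoc, csrc_snoc, ctgt_snoc, total1_snoc, total2_snoc in G; simpl in G.
    specialize (G ltac:(lia) HL1 HB2 Ht).
    eapply within_budget_le; [apply (within_budget_ins _ _ _ _ (c :: w) P2 Q2 G) | |]; auto; lra.
  - pose proof (compose_del_last n (B1 ++ [Charged (Sub a b) P1 Q1]) B2 c w P2 Q2 IH) as G.
    rewrite length_snoc, csrc_snoc, ctgt_snoc, total1_snoc, total2_snoc in G; simpl in G.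
    specialize (G ltac:(lia) HL1 HB2 HP2 HQ2 Hc2 Ht).
    eapply within_budget_le; [exact G | |]; lra.
  - pose proof (compose_ins_last n B1 (B2 ++ [Charged e2 P2 Q2]) c w P1 Q1 IH) as G.
    rewrite length_snoc, csrc_snoc, ctgt_snoc, total1_snoc, total2_snoc in G; simpl in G.
    specialize (G ltac:(lia) HB1 HL2 HP1 HQ1 Hc1 Ht).
    eapply within_budget_le; [exact G | |]; lra.
  - pose proof (IH B1 (B2 ++ [Charged e2 P2 Q2])) as G.
    rewrite length_snoc, csrc_snoc, ctgt_snoc, total1_snoc, total2_snoc in G; simpl in G.
    specialize (G ltac:(lia) HB1 HL2 Ht).
    eapply within_budget_le; [apply (within_budget_del _ _ _ _ (c :: w) P1 Q1 G) | |]; auto; lra.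
Qed.

Local Notation ED := (EDp d alpha beta p).

Lemma EDp_succ f u v : ED (S f) u v =
  match rev u with
  | [] => match rev v with [] => 0 | _ :: _ => pw (alpha v) end
  | a :: ru => match rev v with
     | [] => pw (beta u)
     | b :: rv => fold_right Rmin (ED f (rev ru) (rev rv) + pw (d a b))
         (map (fun k => ED f u (firstn (length v - k) v) + pw (alpha (skipn (length v - k) v)))
             (seq 1 (length v))
          ++ map (fun k => ED f (firstn (length u - k) u) v + pw (beta (skipn (length u - k) u)))
             (seq 1 (length u)))
     end
  end.
Proof. reflexivity. Qed.

Lemma ins_cost_le_script_cost A : script_src A = [] -> ins_cost (script_tgt A) <= script_cost A.
Proof.
  intros Hs. pose proof (ins_cost_tgt_le A [] []) as H.
  rewrite !app_nil_r in H; simpl in H. rewrite Hs, ins_cost_nil in H. lra.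
Qed.

Lemma del_cost_le_script_cost A : script_tgt A = [] -> del_cost (script_src A) <= script_cost A.
Proof.
  intros Ht. pose proof (del_cost_src_le A [] []) as H.
  rewrite !app_nil_r in H; simpl in H. rewrite Ht, del_cost_nil in H. lra.
Qed.

Lemma EDp_le_script_cost A : forall fuel,
  (length (script_src A) + length (script_tgt A) < fuel)%nat ->
  ED fuel (script_src A) (script_tgt A) <= script_cost A.
Proof.
  induction A as [|e A IH] using rev_ind; intros fuel Hf.
  { destruct fuel as [|f]; [simpl in Hf; lia | simpl; lra]. }
  destruct fuel as [|f]; [lia|]. rewrite EDp_succ.
  destruct (rev (script_src (A ++ [e]))) as [|a ru] eqn:Es.
  { pose proof (ins_cost_le_script_cost _ (rev_eq_nil _ Es)) as Hins.
    destruct (rev (script_tgt (A ++ [e]))) as [|b rv] eqn:Et; [apply script_cost_ge0|].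
    destruct (script_tgt (A ++ [e])); [discriminate | exact Hins]. }
  destruct (rev (script_tgt (A ++ [e]))) as [|b rv] eqn:Et.
  { pose proof (del_cost_le_script_cost _ (rev_eq_nil _ Et)) as Hdel.
    destruct (script_src (A ++ [e])) as [|c u]; [discriminate | exact Hdel]. }
  rewrite script_src_app, script_tgt_app, !length_app in Hf.
  rewrite script_cost_app; simpl script_cost.
  rewrite script_src_app, script_tgt_app in *.
  destruct e as [a0 b0|c w|c w]; simpl in Es, Et, Hf |- *.
  - rewrite rev_app_distr in Es, Et; simpl in Es, Et.
    injection Es as <- <-; injection Et as <- <-. rewrite !rev_involutive.
    eapply Rle_trans; [apply fold_right_Rmin_le_init|].
    pose proof (IH f ltac:(lia)); lra.
  - (* the recursion inserts the last gap [c :: w] at [k = length (c :: w)] *)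
    rewrite !app_nil_r.
    eapply Rle_trans; [apply fold_right_Rmin_le_In, in_or_app; left; apply in_map_iff;
      exists (length (c :: w)); split;
      [reflexivity | apply in_seq; rewrite length_app; simpl; lia]|].
    rewrite length_app, Nat.add_sub, firstn_app, skipn_app, firstn_all, skipn_all, Nat.sub_diag.
    simpl; rewrite app_nil_r.
    pose proof (IH f ltac:(lia)); unfold ins_cost; simpl; lra.
  - rewrite !app_nil_r.
    eapply Rle_trans; [apply fold_right_Rmin_le_In, in_or_app; right; apply in_map_iff;
      exists (length (c :: w)); split;
      [reflexivity | apply in_seq; rewrite length_app; simpl; lia]|].
    rewrite length_app, Nat.add_sub, firstn_app, skipn_app, firstn_all, skipn_all, Nat.sub_diag.
    simpl; rewrite app_nil_r.
    pose proof (IH f ltac:(lia)); unfold del_cost; simpl; lra.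
Qed.

Lemma EDp_attained fuel : forall x y, (length x + length y < fuel)%nat ->
  exists A, script_src A = x /\ script_tgt A = y /\ script_cost A = ED fuel x y.
Proof.
  induction fuel as [|f IH]; intros x y Hf; [lia|]. rewrite EDp_succ.
  destruct (rev x) as [|a ru] eqn:Ex.
  { apply rev_eq_nil in Ex; subst x.
    destruct (rev y) as [|b rv] eqn:Ey.
    { apply rev_eq_nil in Ey; subst y.
      exists []; repeat split. }
    destruct y as [|c w]; [discriminate|].
    exists [Ins c w]; simpl; rewrite app_nil_r; repeat split; unfold ins_cost; simpl; ring. }
  destruct (rev y) as [|b rv] eqn:Ey.
  { apply rev_eq_nil in Ey; subst y.
    destruct x as [|c w]; [discriminate|].
    exists [Del c w]; simpl; rewrite app_nil_r; repeat split; unfold del_cost; simpl; ring. }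
  apply rev_eq_cons in Ex; apply rev_eq_cons in Ey.
  match goal with |- exists A, _ /\ _ /\ script_cost A = fold_right Rmin ?b0 ?L =>
    destruct (fold_right_Rmin_cases b0 L) as [E|E]; [rewrite E|] end.
  - destruct (IH (rev ru) (rev rv)) as (A & Hs & Ht & Hc).
    { rewrite Ex, Ey, !length_app in Hf; simpl in Hf; lia. }
    exists (A ++ [Sub a b]); rewrite script_src_app, script_tgt_app, script_cost_app, Hs, Ht, Hc.
    simpl; repeat split; [congruence | congruence | ring].
  - apply in_app_or in E as [E|E]; apply in_map_iff in E as (k & Ek & Hk);
      apply in_seq in Hk; rewrite <- Ek.
    + destruct (IH x (firstn (length y - k) y)) as (A & Hs & Ht & Hc).
      { rewrite length_firstn; lia. }
      destruct (skipn (length y - k) y) as [|c w] eqn:Eskip.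
      { apply (f_equal (@length _)) in Eskip; rewrite length_skipn in Eskip; simpl in Eskip; lia. }
      exists (A ++ [Ins c w]); rewrite script_src_app, script_tgt_app, script_cost_app, Hs, Ht, Hc.
      simpl; rewrite !app_nil_r, <- Eskip, firstn_skipn, Eskip.
      repeat split; unfold ins_cost; simpl; ring.
    + destruct (IH (firstn (length x - k) x) y) as (A & Hs & Ht & Hc).
      { rewrite length_firstn; lia. }
      destruct (skipn (length x - k) x) as [|c w] eqn:Eskip.
      { apply (f_equal (@length _)) in Eskip; rewrite length_skipn in Eskip; simpl in Eskip; lia. }
      exists (A ++ [Del c w]); rewrite script_src_app, script_tgt_app, script_cost_app, Hs, Ht, Hc.
      simpl; rewrite !app_nil_r, <- Eskip, firstn_skipn, Eskip.
      repeat split; unfold del_cost; simpl; ring.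
Qed.

Definition Dp x y := ED (S (length x + length y)) x y.

Lemma Dp_attained x y : exists A, script_src A = x /\ script_tgt A = y /\ script_cost A = Dp x y.
Proof. apply EDp_attained; lia. Qed.

Lemma Dp_le_script_cost A : Dp (script_src A) (script_tgt A) <= script_cost A.
Proof. apply EDp_le_script_cost; lia. Qed.

Lemma Dp_ge0 x y : 0 <= Dp x y.
Proof. destruct (Dp_attained x y) as (A & _ & _ & <-); apply script_cost_ge0. Qed.

Lemma edit_dist_Dp x y : edit_dist d alpha beta p x y = rt (Dp x y).
Proof. unfold edit_dist, Dp; rewrite Rdiv_1_l; reflexivity. Qed.

Definition charge_left (A : list edit) := map (fun e => Charged e (edit_cost e) 0) A.
Definition charge_right (A : list edit) := map (fun e => Charged e 0 (edit_cost e)) A.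

Lemma charge_left_spec A : edits (charge_left A) = A /\
  total1 (charge_left A) = script_cost A /\ total2 (charge_left A) = 0 /\
  Forall left_charged (charge_left A).
Proof.
  unfold edits, total1, total2, charge_left.
  induction A as [|e A (IHe & IH1 & IH2 & IHf)]; simpl; [repeat split; constructor|].
  rewrite IHe, IH1, IH2; pose proof (edit_cost_ge0 e).
  split; [reflexivity | split; [ring | split; [ring|]]].
  constructor; [|exact IHf].
  split; [unfold covered; simpl; repeat split; lra | intros a b E; simpl in E; subst e; simpl; lra].
Qed.

Lemma charge_right_spec A : edits (charge_right A) = A /\
  total1 (charge_right A) = 0 /\ total2 (charge_right A) = script_cost A /\
  Forall right_charged (charge_right A).
Proof.
  unfold edits, total1, total2, charge_right.
  induction A as [|e A (IHe & IH1 & IH2 & IHf)]; simpl; [repeat split; constructor|].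
  rewrite IHe, IH1, IH2; pose proof (edit_cost_ge0 e).
  split; [reflexivity | split; [ring | split; [ring|]]].
  constructor; [|exact IHf].
  split; [unfold covered; simpl; repeat split; lra | intros a b E; simpl in E; subst e; simpl; lra].
Qed.

Lemma edit_dist_triangle x y z :
  edit_dist d alpha beta p x z <= edit_dist d alpha beta p x y + edit_dist d alpha beta p y z.
Proof.
  rewrite !edit_dist_Dp.
  destruct (Dp_attained x y) as (A1 & Hs1 & Ht1 & Hc1).
  destruct (Dp_attained y z) as (A2 & Hs2 & Ht2 & Hc2).
  destruct (charge_left_spec A1) as (E1 & T11 & T12 & HL1).
  destruct (charge_right_spec A2) as (E2 & T21 & T22 & HL2).
  pose proof (composable_below_all (S (length (charge_left A1) + length (charge_right A2)))
                (charge_left A1) (charge_right A2) ltac:(lia) HL1 HL2) as G.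
  rewrite E1, E2, Ht1, Hs2, Hs1, Ht2, T11, T12, T21, T22, Rplus_0_l, Rplus_0_r, Hc1, Hc2 in G.
  destruct (G eq_refl) as (_ & _ & A & <- & <- & HA).
  eapply Rle_trans; [|exact HA].
  apply rt_le; [exact Hp | split; [apply Dp_ge0 | apply Dp_le_script_cost]].
Qed.

Lemma Dp_refl x : Dp x x = 0.
Proof.
  destruct Hdq as [_ [d_eq0 _]].
  set (id_script := map (fun a => Sub a a)).
  assert (Hid : forall x, script_src (id_script x) = x /\ script_tgt (id_script x) = x /\
                          script_cost (id_script x) = 0).
  { clear x; induction x as [|a x (Hs & Ht & Hc)]; [repeat split|].
    split; [|split]; simpl; [f_equal; exact Hs | f_equal; exact Ht |].
    rewrite Hc, (proj1 (proj2 (d_eq0 a a) eq_refl)), rpow_nonpos; lra. }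
  destruct (Hid x) as (Hs & Ht & Hc).
  pose proof (Dp_le_script_cost (id_script x)) as H; rewrite Hs, Ht, Hc in H.
  pose proof (Dp_ge0 x x); lra.
Qed.

Hypothesis Hds : separating d.
Hypothesis alpha_pos : forall w, w <> [] -> 0 < pw (alpha w).
Hypothesis beta_pos : forall w, w <> [] -> 0 < pw (beta w).

Lemma script_cost_eq0 A : script_cost A = 0 -> script_src A = script_tgt A.
Proof.
  induction A as [|e A IH]; simpl; [reflexivity|]; intros H.
  pose proof (edit_cost_ge0 e); pose proof (script_cost_ge0 A).
  rewrite IH by lra. f_equal.
  destruct e as [a b|c w|c w]; simpl in *.
  - assert (d a b = 0) by (apply (rpow_eq0 _ p); [apply Hdq | lra]).
    rewrite (Hds a b) by assumption; reflexivity.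
  - pose proof (alpha_pos (c :: w) ltac:(discriminate)).
    unfold ins_cost in *; simpl in *; lra.
  - pose proof (beta_pos (c :: w) ltac:(discriminate)).
    unfold del_cost in *; simpl in *; lra.
Qed.

Lemma edit_dist_separating : separating (edit_dist d alpha beta p).
Proof.
  intros x y H. rewrite edit_dist_Dp in H.
  apply rpow_eq0 in H; [|apply Dp_ge0].
  destruct (Dp_attained x y) as (A & <- & <- & Hc).
  apply script_cost_eq0; congruence.
Qed.

Lemma edit_dist_quasi_metric : quasi_metric (edit_dist d alpha beta p).
Proof.
  split; [intros; apply rpow_ge0 | split; [intros x y; split | exact edit_dist_triangle]].
  - intros [H _]; apply edit_dist_separating, H.
  - intros <-; rewrite edit_dist_Dp, Dp_refl, rpow_nonpos by lra; split; reflexivity.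
Qed.

End EditScripts.

Theorem theoremA1 (Sigma : Type) (p : R) (d : Sigma -> Sigma -> R)
    (alpha beta : list Sigma -> R)
    (Hp : 1 <= p)
    (Hdq : quasi_metric d) (Hds : separating d)
    (Ha : gap_penalty (fun w => rpow (alpha w) p))
    (Hb : gap_penalty (fun w => rpow (beta w) p))
    (W1 : forall (a b : Sigma) (u v : list Sigma),
        rpow (d a b) p + rpow (ext0 beta (u ++ b :: v)) p
        >= rpow (ext0 beta (u ++ a :: v)) p)
    (W2 : forall (a b : Sigma) (u v : list Sigma),
        rpow (d a b) p + rpow (ext0 alpha (u ++ a :: v)) p
        >= rpow (ext0 alpha (u ++ b :: v)) p)
    (W3 : forall u v x : list Sigma,
        rpow (ext0 beta (u ++ v)) p + rpow (ext0 beta x) p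
        >= rpow (ext0 beta (u ++ x ++ v)) p)
    (W4 : forall u v x : list Sigma,
        rpow (ext0 alpha (u ++ v)) p + rpow (ext0 alpha x) p
        >= rpow (ext0 alpha (u ++ x ++ v)) p)
    (W5 : forall u v x : list Sigma,
        rpow (ext0 beta (u ++ x ++ v)) p + rpow (ext0 alpha x) p
        >= rpow (ext0 beta (u ++ v)) p)
    (W6 : forall u v x : list Sigma,
        rpow (ext0 alpha (u ++ x ++ v)) p + rpow (ext0 beta x) p
        >= rpow (ext0 alpha (u ++ v)) p)
    (W7 : forall u v x : list Sigma,
        rpow (ext0 alpha (u ++ x)) p + rpow (ext0 beta (x ++ v)) p
        >= rpow (ext0 alpha u) p + rpow (ext0 beta v) p)
    (W8 : forall u v x : list Sigma,
        rpow (ext0 beta (u ++ x)) p + rpow (ext0 alpha (x ++ v)) p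
        >= rpow (ext0 beta u) p + rpow (ext0 alpha v) p) :
  quasi_metric (edit_dist d alpha beta p) /\
  separating (edit_dist d alpha beta p).
Proof.
  destruct Ha as [alpha_pos _], Hb as [beta_pos _].
  split; [apply edit_dist_quasi_metric | apply edit_dist_separating]; assumption.
Qed.
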